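(* Let $\lambda,\mu,\alpha>0$. For $x\in\mathbb{Z}^+$ let $\xi_x(t)$, $t\ge0$, denote the Poisson process with uniform catastrophes with parameters $\lambda,\mu,\alpha$ started from $\xi_x(0)=x$ (defined in the context). Then for any integers $0\le x<y$, any $z\in\mathbb{R}$ and any $t\ge0$, $$\mathbf{P}(\xi_y(t)>z)\le\mathbf{P}(\xi_x(t)>z-|x-y|).$$
   Context: Let $\eta$ be a Markov chain on $\mathbb{Z}^+=\{0,1,2,\dots\}$ with transition probabilities $\mathbf{P}(\eta(n+1)=j\mid\eta(n)=i)=\frac{\lambda}{\lambda+\mu}$ if $j=i+1$ (and $i\ge1$), $=\frac{\mu}{i(\lambda+\mu)}$ if $0\le j<i$, $i\neq0$, and $=1$ if $i=0$, $j=1$. Let $\nu(t)$ be a Poisson process of rate $\alpha$ independent of $\eta$. The process $\xi_x(t):=\eta(\nu(t))$ where $\eta(0)=x$ is the Poisson process with uniform catastrophes started at $x$. *)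

From Stdlib Require Import Reals Arith.
From Coquelicot Require Import Coquelicot.
Open Scope R_scope.

Definition trans (lam mu : R) (i j : nat) : R :=
  match i with
  | O => if Nat.eqb j 1 then 1 else 0
  | S _ =>
      if Nat.eqb j (S i) then lam / (lam + mu)
      else if Nat.ltb j i then mu / (INR i * (lam + mu))
      else 0
  end.

(* n-step distribution of eta started at x: dist n x j = P(eta(n) = j | eta(0) = x).
   From x in n steps eta stays <= x + n, so the sum over k is finite. *)
Fixpoint dist (lam mu : R) (n x : nat) : nat -> R :=
  match n with
  | O => fun j => if Nat.eqb j x then 1 else 0
  | S m => fun j => sum_f_R0 (fun k => dist lam mu m x k * trans lam mu k j) (x + m)
  end.

Definition chain_tail (lam mu : R) (n x : nat) (z : R) : R :=
  sum_f_R0 (fun j => if Rlt_dec z (INR j) then dist lam mu n x j else 0) (x + n).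

(* P(xi_x(t) > z) where xi_x(t) = eta(nu(t)), nu a rate-alpha Poisson process
   independent of eta: conditioning on nu(t) = n (Poisson(alpha t) law). *)
Definition xi_tail (lam mu alpha : R) (x : nat) (t z : R) : R :=
  Series (fun n => exp (- (alpha * t)) * (alpha * t) ^ n / INR (fact n)
                   * chain_tail lam mu n x z).

From Pilot Require Import Defs.
From Stdlib Require Import Reals Arith Lia Lra.
From Coquelicot Require Import Coquelicot.
Open Scope R_scope.

(* The embedded chain is monotone up to a shift: if [E j <= F l] whenever
   [j <= l + d] ([shift_le d E F], with [d >= 1]), the same holds for the
   one-step means [step_mean E] and [step_mean F].  From states [k <= i + d]
   both chains step up together, and a catastrophe lands uniformly on
   [{0..k-1}] resp. [{0..i-1}], two laws that a quantile coupling keeps within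
   distance [d].  Iterating [n] times with the indicators of [(z, oo)] and
   [(z - d, oo)] compares the tails of [eta(n)] started at [y] and at
   [x = y - d]; averaging over the Poisson number of steps gives the claim. *)

Lemma sum_f_R0_vanishing_tail (f : nat -> R) (M N : nat) :
  (M <= N)%nat -> (forall j, (M < j <= N)%nat -> f j = 0) ->
  sum_f_R0 f N = sum_f_R0 f M.
Proof.
  induction N as [|N IH]; intros HMN Hf.
  - now replace M with 0%nat by lia.
  - destruct (Nat.eq_dec M (S N)) as [->|HM]; [reflexivity|].
    simpl; rewrite Hf, IH by (intros; try apply Hf; lia); ring.
Qed.

Lemma sum_f_R0_swap (u : nat -> nat -> R) (m n : nat) :
  sum_f_R0 (fun i => sum_f_R0 (u i) n) m = sum_f_R0 (fun j => sum_f_R0 (fun i => u i j) m) n.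
Proof.
  rewrite <- !sum_n_Reals.
  rewrite <- (sum_n_ext _ _ _ (fun i => sum_n_Reals (u i) n)).
  rewrite <- (sum_n_ext _ _ _ (fun j => sum_n_Reals (fun i => u i j) m)).
  apply sum_n_switch.
Qed.

Lemma sum_f_R0_div_blocks (G : nat -> R) (i K : nat) :
  sum_f_R0 (fun r => G (r / S i)%nat) (K * S i + i) = INR (S i) * sum_f_R0 G K.
Proof.
  induction K as [|K IH].
  - cbn [Nat.mul Nat.add sum_f_R0].
    rewrite (sum_eq _ (fun _ => G 0%nat)), sum_cte.
    + ring.
    + intros r Hr; now rewrite Nat.div_small by lia.
  - rewrite (tech2 _ (K * S i + i)) by lia; rewrite IH.
    replace (S K * S i + i - S (K * S i + i))%nat with i by lia.
    rewrite (sum_eq (fun r => G ((S (K * S i + i) + r) / S i)%nat) (fun _ => G (S K))).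
    + rewrite sum_cte; simpl (sum_f_R0 G (S K)); ring.
    + intros r Hr.
      replace (S (K * S i + i) + r)%nat with (r + S K * S i)%nat by lia.
      now rewrite Nat.div_add, Nat.div_small by lia.
Qed.

Definition mean (E : nat -> R) (k : nat) : R := sum_f_R0 E k / INR (S k).

Lemma mean_const (c : R) (k : nat) : mean (fun _ => c) k = c.
Proof.
  unfold mean; rewrite sum_cte; field.
  apply not_0_INR; lia.
Qed.

Lemma mean_le (E F : nat -> R) (k : nat) :
  (forall j, (j <= k)%nat -> E j <= F j) -> mean E k <= mean F k.
Proof.
  intros HEF; unfold mean, Rdiv.
  apply Rmult_le_compat_r; [apply Rlt_le, Rinv_0_lt_compat, lt_0_INR; lia|].
  now apply sum_Rle.
Qed.

Definition shift_le (d : nat) (E F : nat -> R) : Prop :=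
  forall j l, (j <= l + d)%nat -> E j <= F l.

(* The uniform index [r] on [0, (k+1)(i+1)) projects onto uniform indices
   [r / (i+1)] on [0, k] and [r / (k+1)] on [0, i]: a quantile coupling. *)
Lemma div_quantile_coupling (r k i d : nat) :
  (k <= i + d)%nat -> (r < S k * S i)%nat -> (r / S i <= r / S k + d)%nat.
Proof.
  intros Hki Hr.
  pose proof (Nat.Div0.mul_div_le r (S i)) as Hu.
  pose proof (Nat.mul_succ_div_gt r (S k) ltac:(lia)) as Hv.
  assert (Hvi : (r / S k < S i)%nat) by (apply Nat.Div0.div_lt_upper_bound; lia).
  set (u := (r / S i)%nat) in *; set (v := (r / S k)%nat) in *.
  nia.
Qed.

Lemma mean_shift_le (d : nat) (E F : nat -> R) (k i : nat) :
  shift_le d E F -> (k <= i + d)%nat -> mean E k <= mean F i.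
Proof.
  intros HEF Hki; unfold mean.
  assert (0 < INR (S k)) by (apply lt_0_INR; lia).
  assert (0 < INR (S i)) by (apply lt_0_INR; lia).
  assert (INR (S i) * sum_f_R0 E k <= INR (S k) * sum_f_R0 F i).
  { rewrite <- !sum_f_R0_div_blocks.
    replace (i * S k + k)%nat with (k * S i + i)%nat by lia.
    apply sum_Rle; intros r Hr; apply HEF, div_quantile_coupling; lia. }
  apply (Rmult_le_reg_l (INR (S k) * INR (S i))); [nra|].
  replace (INR (S k) * INR (S i) * (sum_f_R0 E k / INR (S k)))
    with (INR (S i) * sum_f_R0 E k) by (field; lra).
  replace (INR (S k) * INR (S i) * (sum_f_R0 F i / INR (S i)))
    with (INR (S k) * sum_f_R0 F i) by (field; lra).
  assumption.
Qed.

Section Chain.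

Variables lam mu : R.
Hypothesis lam_gt0 : 0 < lam.
Hypothesis mu_gt0 : 0 < mu.

Definition step_mean (E : nat -> R) (k : nat) : R :=
  sum_f_R0 (fun j => trans lam mu k j * E j) (S k).

(* From state 0 the chain moves to 1 surely; pretending it is "reset" to 1
   gives every state the same decomposition [step_mean_eq]. *)
Definition reset_mean (E : nat -> R) (k : nat) : R :=
  match k with O => E 1%nat | S k' => mean E k' end.

Let p := lam / (lam + mu).
Let q := mu / (lam + mu).

Lemma trans_ge0 (i j : nat) : 0 <= trans lam mu i j.
Proof.
  unfold trans; destruct i as [|i'].
  - destruct (j =? 1)%nat; lra.
  - assert (0 < INR (S i')) by (apply lt_0_INR; lia).
    destruct (j =? S (S i'))%nat; [|destruct (j <? S i')%nat].
    all: try apply Rlt_le, Rdiv_lt_0_compat; nra.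
Qed.

Lemma trans_eq0 (k j : nat) : (S k < j)%nat -> trans lam mu k j = 0.
Proof.
  intros Hkj; unfold trans; destruct k as [|k'].
  - destruct (Nat.eqb_spec j 1); [lia|reflexivity].
  - destruct (Nat.eqb_spec j (S (S k'))); [lia|].
    destruct (Nat.ltb_spec j (S k')); [lia|reflexivity].
Qed.

Lemma dist_ge0 (n x j : nat) : 0 <= Defs.dist lam mu n x j.
Proof.
  revert j; induction n as [|n IH]; intros j; simpl.
  - destruct (j =? x)%nat; lra.
  - rewrite <- (Rmult_0_l (INR (S (x + n)))), <- sum_cte.
    apply sum_Rle; intros k _; apply Rmult_le_pos; [apply IH|apply trans_ge0].
Qed.

Lemma step_mean_eq (E : nat -> R) (k : nat) :
  step_mean E k = p * E (S k) + q * reset_mean E k.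
Proof.
  unfold step_mean, p, q; destruct k as [|k].
  - unfold trans; simpl; field; lra.
  - assert (0 < INR (S k)) by (apply lt_0_INR; lia).
    cbn [sum_f_R0 reset_mean]; unfold mean.
    rewrite (sum_eq (fun j => trans lam mu (S k) j * E j)
                    (fun j => E j * (mu / (INR (S k) * (lam + mu))))).
    + rewrite <- scal_sum; unfold trans; cbv beta iota.
      rewrite Nat.eqb_refl.
      destruct (Nat.eqb_spec (S k) (S (S k))); [lia|].
      destruct (Nat.ltb_spec (S k) (S k)); [lia|].
      field; lra.
    + intros j Hj; unfold trans.
      destruct (Nat.eqb_spec j (S (S k))); [lia|].
      destruct (Nat.ltb_spec j (S k)); [ring|lia].
Qed.

Lemma step_mean_const (c : R) (k : nat) : step_mean (fun _ => c) k = c.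
Proof.
  rewrite step_mean_eq; unfold p, q.
  assert (Hreset : reset_mean (fun _ => c) k = c) by (destruct k; [reflexivity|apply mean_const]).
  rewrite Hreset; field; lra.
Qed.

Lemma reset_mean_shift_le (d : nat) (E F : nat -> R) (k i : nat) :
  (1 <= d)%nat -> shift_le d E F -> (k <= i + d)%nat ->
  reset_mean E k <= reset_mean F i.
Proof.
  intros Hd HEF Hki; destruct k as [|k], i as [|i]; simpl.
  - apply HEF; lia.
  - rewrite <- (mean_const (E 1%nat) i); apply mean_le; intros; apply HEF; lia.
  - rewrite <- (mean_const (F 1%nat) k); apply mean_le; intros; apply HEF; lia.
  - apply (mean_shift_le d); [assumption|lia].
Qed.

Lemma step_mean_shift_le (d : nat) (E F : nat -> R) :
  (1 <= d)%nat -> shift_le d E F -> shift_le d (step_mean E) (step_mean F).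
Proof.
  intros Hd HEF k i Hki; rewrite !step_mean_eq; unfold p, q.
  apply Rplus_le_compat; apply Rmult_le_compat_l.
  - apply Rlt_le, Rdiv_lt_0_compat; lra.
  - apply HEF; lia.
  - apply Rlt_le, Rdiv_lt_0_compat; lra.
  - now apply (reset_mean_shift_le d).
Qed.

Definition chain_mean (n x : nat) (E : nat -> R) : R :=
  sum_f_R0 (fun j => Defs.dist lam mu n x j * E j) (x + n).

Lemma chain_mean_0 (x : nat) (E : nat -> R) : chain_mean 0 x E = E x.
Proof.
  unfold chain_mean; simpl Defs.dist; rewrite Nat.add_0_r.
  destruct x as [|x]; simpl; [ring|].
  rewrite (sum_eq _ (fun _ => 0)), sum_cte, Nat.eqb_refl; [ring|].
  intros j Hj; destruct (Nat.eqb_spec j (S x)); [lia|ring].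
Qed.

Lemma chain_mean_S (n x : nat) (E : nat -> R) :
  chain_mean (S n) x E = chain_mean n x (step_mean E).
Proof.
  unfold chain_mean, step_mean; simpl Defs.dist.
  rewrite (sum_eq _ (fun j => sum_f_R0 (fun k =>
             Defs.dist lam mu n x k * trans lam mu k j * E j) (x + n)))
    by (intros; now rewrite Rmult_comm, scal_sum).
  rewrite sum_f_R0_swap; apply sum_eq; intros k Hk.
  rewrite scal_sum, (sum_f_R0_vanishing_tail _ (S k)) by
    (lia || (intros j Hj; rewrite trans_eq0 by lia; ring)).
  apply sum_eq; intros; ring.
Qed.

Lemma chain_mean_le (n x : nat) (E F : nat -> R) :
  (forall j, E j <= F j) -> chain_mean n x E <= chain_mean n x F.
Proof.
  intros HEF; apply sum_Rle; intros j _.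
  apply Rmult_le_compat_l; [apply dist_ge0|apply HEF].
Qed.

Lemma chain_mean_const (n x : nat) (c : R) : chain_mean n x (fun _ => c) = c.
Proof.
  induction n as [|n IH]; [apply chain_mean_0|].
  rewrite chain_mean_S; etransitivity; [|exact IH].
  apply sum_eq; intros; now rewrite step_mean_const.
Qed.

Lemma chain_mean_shift_le (d n x y : nat) (E F : nat -> R) :
  (1 <= d)%nat -> shift_le d E F -> (y <= x + d)%nat ->
  chain_mean n y E <= chain_mean n x F.
Proof.
  intros Hd HEF Hyx; revert E F HEF; induction n as [|n IH]; intros E F HEF.
  - rewrite !chain_mean_0; apply HEF, Hyx.
  - rewrite !chain_mean_S; apply IH, step_mean_shift_le; assumption.
Qed.

Definition tail_indicator (z : R) (j : nat) : R := if Rlt_dec z (INR j) then 1 else 0.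

Lemma chain_tail_eq_chain_mean (n x : nat) (z : R) :
  chain_tail lam mu n x z = chain_mean n x (tail_indicator z).
Proof.
  apply sum_eq; intros j _; unfold tail_indicator.
  destruct (Rlt_dec z (INR j)); ring.
Qed.

Lemma tail_indicator_shift_le (d : nat) (z : R) :
  shift_le d (tail_indicator z) (tail_indicator (z - INR d)).
Proof.
  intros j l Hjl; unfold tail_indicator.
  apply le_INR in Hjl; rewrite plus_INR in Hjl.
  destruct (Rlt_dec z (INR j)), (Rlt_dec (z - INR d) (INR l)); lra.
Qed.

Lemma chain_tail_shift_le (d n x y : nat) (z : R) :
  (1 <= d)%nat -> (y <= x + d)%nat ->
  chain_tail lam mu n y z <= chain_tail lam mu n x (z - INR d).
Proof.
  intros Hd Hyx; rewrite !chain_tail_eq_chain_mean.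
  apply (chain_mean_shift_le d); [assumption|apply tail_indicator_shift_le|assumption].
Qed.

Lemma chain_tail_bounds (n x : nat) (z : R) : 0 <= chain_tail lam mu n x z <= 1.
Proof.
  rewrite chain_tail_eq_chain_mean, <- (chain_mean_const n x 0), <- (chain_mean_const n x 1).
  split; apply chain_mean_le; intros j; unfold tail_indicator; destruct Rlt_dec; lra.
Qed.

End Chain.

Definition poisson_weight (s : R) (n : nat) : R := exp (- s) * s ^ n / INR (fact n).

Lemma is_series_poisson_weight (s : R) : is_series (poisson_weight s) 1.
Proof.
  replace 1 with (scal (exp (- s)) (exp s))
    by (change (exp (- s) * exp s = 1); rewrite <- exp_plus, Rplus_opp_l; apply exp_0).
  apply (is_series_ext (fun n => scal (exp (- s)) (scal (pow_n s n) (/ INR (fact n))))).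
  - intros n; rewrite pow_n_pow; unfold poisson_weight, scal; simpl; unfold mult; simpl.
    unfold Rdiv; ring.
  - apply (@is_series_scal_l R_AbsRing R_NormedModule), is_exp_Reals.
Qed.

Lemma poisson_weight_ge0 (s : R) (n : nat) : 0 <= s -> 0 <= poisson_weight s n.
Proof.
  intros Hs; unfold poisson_weight, Rdiv.
  apply Rmult_le_pos; [apply Rmult_le_pos|].
  - apply Rlt_le, exp_pos.
  - now apply pow_le.
  - apply Rlt_le, Rinv_0_lt_compat, INR_fact_lt_0.
Qed.

Lemma poisson_mixture_le (s : R) (a b : nat -> R) :
  0 <= s -> (forall n, 0 <= a n <= b n) -> (forall n, b n <= 1) ->
  Series (fun n => poisson_weight s n * a n) <= Series (fun n => poisson_weight s n * b n).
Proof.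
  intros Hs Hab Hb1.
  assert (Hw : forall n, 0 <= poisson_weight s n) by (intros; now apply poisson_weight_ge0).
  apply Series_le.
  - intros n; specialize (Hab n); specialize (Hw n); split; nra.
  - apply (@ex_series_le R_AbsRing R_CompleteNormedModule _ (poisson_weight s)).
    + intros n; specialize (Hab n); specialize (Hb1 n); specialize (Hw n).
      rewrite Rabs_pos_eq; nra.
    + eexists; apply is_series_poisson_weight.
Qed.

Theorem corollary4p1 (lam mu alpha : R) (x y : nat) (z t : R) :
  0 < lam -> 0 < mu -> 0 < alpha -> (x < y)%nat -> 0 <= t ->
  xi_tail lam mu alpha y t z <= xi_tail lam mu alpha x t (z - Rabs (INR x - INR y)).
Proof.
  intros Hlam Hmu Halpha Hxy Ht.
  assert (Hdist : Rabs (INR x - INR y) = INR (y - x)).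
  { apply lt_INR in Hxy as Hlt.
    now rewrite minus_INR, Rabs_minus_sym, Rabs_pos_eq by (lia || lra). }
  rewrite Hdist.
  apply (poisson_mixture_le (alpha * t) (fun n => chain_tail lam mu n y z)
                            (fun n => chain_tail lam mu n x (z - INR (y - x)))).
  - nra.
  - intros n; split; [apply chain_tail_bounds; assumption|].
    apply chain_tail_shift_le; trivial; lia.
  - intros n; apply chain_tail_bounds; assumption.
Qed.
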